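(* For all positive integers $r,s,k$ with $1\le r,s\le k$, $$\sum_{n\ge0}\big|\mathcal A_{2n+1}^{(k)}(r\to s)\big|\,x^{2n}=\begin{cases}(-1)^{r+s+1}\dfrac{xU_{2r-2}(x/2)U_{2k+1-2s}(x/2)}{U_{2k}(x/2)},&r<s,\\[2mm] 1-\dfrac{xU_{2r-2}(x/2)U_{2k+1-2r}(x/2)}{U_{2k}(x/2)},&r=s,\\[2mm] (-1)^{r+s+1}\dfrac{xU_{2s-2}(x/2)U_{2k+1-2r}(x/2)}{U_{2k}(x/2)},&r>s,\end{cases}$$ and $$\sum_{n\ge0}\big|\mathcal A_{2n+2}^{(k)}(r\to s)\big|\,x^{2n+1}=\begin{cases}(-1)^{r+s+1}\dfrac{xU_{2r-2}(x/2)U_{2k-2s}(x/2)}{U_{2k}(x/2)},&r\le s,\\[2mm] (-1)^{r+s+1}\dfrac{xU_{2s-1}(x/2)U_{2k-2r+1}(x/2)}{U_{2k}(x/2)},&r>s.\end{cases}$$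
   Context: For positive integers $n,k$ and $1\le r,s\le k$, $\mathcal A_n^{(k)}(r\to s)$ is the set of integer sequences $(a_1,\dots,a_n)$ with $a_1=r$, $a_n=s$, $1\le a_i\le k$ for all $i$, which are alternating in the sense $a_1\le a_2\ge a_3\le a_4\ge\cdots$, i.e. $a_{2j-1}\le a_{2j}$ and $a_{2j}\ge a_{2j+1}$ whenever the indices are in range. $U_n(x)$ is the $n$-th Chebyshev polynomial of the second kind ($U_0=1$, $U_1(x)=2x$, $U_{n+1}(x)=2xU_n(x)-U_{n-1}(x)$). *)

From Stdlib Require Import Reals.
From Coquelicot Require Import Coquelicot.
From mathcomp Require Import all_boot.

Set Implicit Arguments.
Unset Strict Implicit.
Unset Printing Implicit Defensive.

(* alternating in the sense a_1 <= a_2 >= a_3 <= a_4 >= ... ;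
   with 0-based indices: t_i <= t_{i+1} for even i, t_i >= t_{i+1} for odd i *)
Definition alternating (t : seq nat) : bool :=
  [forall i : 'I_(size t).-1,
     if ~~ odd i then (nth 0%N t i <= nth 0%N t i.+1)%N
     else (nth 0%N t i.+1 <= nth 0%N t i)%N].

(* Encoded as n-tuples over 'I_(k+1)
   (values 0..k) with the extra constraint that every entry is >= 1. *)
Definition Aset (n k r s : nat) : {set n.-tuple 'I_k.+1} :=
  [set t : n.-tuple 'I_k.+1 |
     [&& all (fun a : 'I_k.+1 => (1 <= a)%N) t,
         nth 0%N (map val t) 0 == r,
         nth 0%N (map val t) n.-1 == s &
         alternating (map val t)]].

Definition Acard (n k r s : nat) : nat := #|Aset n k r s|.

Open Scope R_scope.

Fixpoint ChebU (n : nat) (x : R) : R :=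
  match n with
  | O => 1
  | S m => match m with
           | O => (2 * x)
           | S p => (2 * x * ChebU m x - ChebU p x)
           end
  end.

Definition rhs_odd (k r s : nat) (x : R) : R :=
  if (r < s)%N then
    (-1) ^ (r + s + 1) * (x * ChebU (2*r - 2) (x/2) * ChebU (2*k + 1 - 2*s) (x/2))
      / ChebU (2*k) (x/2)
  else if r == s then
    1 - x * ChebU (2*r - 2) (x/2) * ChebU (2*k + 1 - 2*r) (x/2) / ChebU (2*k) (x/2)
  else
    (-1) ^ (r + s + 1) * (x * ChebU (2*s - 2) (x/2) * ChebU (2*k + 1 - 2*r) (x/2))
      / ChebU (2*k) (x/2).

Definition rhs_even (k r s : nat) (x : R) : R :=
  if (r <= s)%N then
    (-1) ^ (r + s + 1) * (x * ChebU (2*r - 2) (x/2) * ChebU (2*k - 2*s) (x/2))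
      / ChebU (2*k) (x/2)
  else
    (-1) ^ (r + s + 1) * (x * ChebU (2*s - 1) (x/2) * ChebU (2*k - 2*r + 1) (x/2))
      / ChebU (2*k) (x/2).

From HB Require Import structures.
From Stdlib Require Import Reals Lra Lia.
From Coquelicot Require Import Coquelicot.
From mathcomp Require Import all_boot zify.

(* Fix k and the first entry r, and for 1 <= s <= k write
     a_s(x) = sum_n |A_{2n+1}(r -> s)| x^{2n},   b_s(x) = sum_n |A_{2n+2}(r -> s)| x^{2n+1}.
   Deleting the last entry of an alternating sequence gives the recursions
     |A_{2n+2}(r -> s)| = sum_{1 <= c <= s} |A_{2n+1}(r -> c)|,
     |A_{2n+3}(r -> s)| = sum_{s <= c <= k} |A_{2n+2}(r -> c)|,
   so for (k+1)|x| < 1, where the counts <= (k+1)^m make all series converge,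
   the generating functions solve the linear system
     (S)  b_s = x * sum_{1 <= c <= s} a_c,   a_s = [r = s] + x * sum_{s <= c <= k} b_c.
   The Chebyshev closed forms rhs_odd / rhs_even solve (S) too: taking first
   differences in s turns (S) into identities that follow from the recurrence
   U_{m+2}(x/2) = x U_{m+1}(x/2) - U_m(x/2) and the product rule
   U_{a+1} U_{b+1} - U_a U_b = U_{a+b+2}, valid wherever U_{2k}(x/2) <> 0, which
   holds near 0 since U_{2k}(0) = (-1)^k.  Finally (S) is a contraction when
   2(k+1)|x| < 1, so both solutions agree and the theorem follows. *)

Open Scope nat_scope.

Definition alt_step (i c v : nat) : bool := if ~~ odd i then c <= v else v <= c.

Lemma alternatingE t :
  alternating t = all (fun i => alt_step i (nth 0 t i) (nth 0 t i.+1)) (iota 0 (size t).-1).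
Proof.
apply/forallP/allP => [H i | H i].
  by rewrite mem_iota add0n => /andP[_ lt_i]; exact: (H (Ordinal lt_i)).
by apply: H; rewrite mem_iota add0n ltn_ord.
Qed.

Lemma alternating_rcons t v : 0 < size t ->
  alternating (rcons t v) = alternating t && alt_step (size t).-1 (last 0 t) v.
Proof.
move=> t_pos; rewrite !alternatingE size_rcons succnK.
rewrite -{1}(prednK t_pos) -addn1 iotaD all_cat add0n /= andbT.
congr andb.
  apply: eq_in_all => i; rewrite mem_iota add0n => /andP[_ lt_i].
  have lt_Si : i.+1 < size t by rewrite -ltn_predRL.
  by rewrite !nth_rcons lt_Si (ltnW lt_Si).
by rewrite !nth_rcons prednK // ltnn eqxx leqnn nth_last.
Qed.

Lemma card_indicator (T : finType) (A : {set T}) : #|A| = \sum_(t : T) (t \in A).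
Proof. by rewrite -sum1_card big_mkcond. Qed.

Lemma sum_indicator_at {T : finType} (t0 : T) {P : pred T} :
  (forall t, P t -> t = t0) -> \sum_(t : T) P t = P t0.
Proof.
move=> only_t0; rewrite (bigD1 t0) //= big1 ?addn0 // => t t_ne.
by case: (P t) (only_t0 t) => // /(_ isT) t_eq; rewrite t_eq eqxx in t_ne.
Qed.

Section Counting.
Variables k r : nat.

Definition tlast {m : nat} (u : m.+1.-tuple 'I_k.+1) : 'I_k.+1 := tnth u ord_max.

Lemma tlastE m (u : m.+1.-tuple 'I_k.+1) : val (tlast u) = nth 0 (map val u) m.
Proof. by rewrite /tlast (tnth_nth ord0) (nth_map ord0) ?size_tuple. Qed.

Lemma Aset_last {m c : nat} {u : m.+1.-tuple 'I_k.+1} :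
  u \in Aset m.+1 k r c -> tlast u = c :> nat /\ 0 < c.
Proof.
rewrite inE => /and4P[/allP pos _ /eqP <-{c} _]; rewrite tlastE; split=> //.
by rewrite (nth_map ord0) ?size_tuple //; apply/pos/mem_nth; rewrite size_tuple.
Qed.

Lemma Aset_rcons m v (u : m.+1.-tuple 'I_k.+1) (a : 'I_k.+1) :
  ([tuple of rcons u a] \in Aset m.+2 k r v) =
  [&& val a == v, 0 < v, u \in Aset m.+1 k r (tlast u) & alt_step m (tlast u) v].
Proof.
have size_u : size (map val u) = m.+1 by rewrite size_map size_tuple.
rewrite !inE /= map_rcons all_rcons !nth_rcons size_u ltnn eqxx /=.
rewrite alternating_rcons ?size_u // (last_nth 0) size_u /= -tlastE eqxx.
case: (val a =P v) => [<-|_]; last by rewrite !andbF.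
by case: (0 < a); case: (all _ _); case: (_ == r); case: (alternating _).
Qed.

Lemma Acard_step m v : 0 < v <= k ->
  Acard m.+2 k r v = \sum_(c < k.+1 | (0 < c) && alt_step m c v) Acard m.+1 k r c.
Proof.
move=> /andP[v_pos v_le]; pose v' : 'I_k.+1 := Ordinal (v_le : v < k.+1).
pose ext (p : m.+1.-tuple 'I_k.+1 * 'I_k.+1) := [tuple of rcons p.1 p.2].
have ext_bij : bijective ext.
  exists (fun t => ([tuple of belast (thead t) (behead t)], last (thead t) (behead t))).
    case=> [[[|y u] size_u] a] //; rewrite /ext /thead (tnth_nth y) /=.
    by congr pair; [apply: val_inj; rewrite /= belast_rcons | rewrite last_rcons].
  by move=> t; apply: val_inj; rewrite /ext /= -lastI [in RHS](tuple_eta t).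
transitivity (\sum_(u : m.+1.-tuple 'I_k.+1) \sum_(a : 'I_k.+1)
                 (ext (u, a) \in Aset m.+2 k r v)).
  rewrite pair_bigA /Acard card_indicator (reindex ext) /=; last exact: onW_bij.
  by apply: eq_bigr => -[u a].
(* only the last entry a = v contributes *)
transitivity (\sum_(u : m.+1.-tuple 'I_k.+1)
                 ((u \in Aset m.+1 k r (tlast u)) && alt_step m (tlast u) v)).
  apply: eq_bigr => u _; rewrite (sum_indicator_at v') => [|a].
    by rewrite Aset_rcons eqxx v_pos.
  by rewrite Aset_rcons => /and4P[/eqP a_v _ _ _]; apply: val_inj.
transitivity (\sum_(c < k.+1) \sum_(u : m.+1.-tuple 'I_k.+1)
                 [&& 0 < c, alt_step m c v & u \in Aset m.+1 k r c]); last first.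
  rewrite [RHS]big_mkcond; apply: eq_bigr => c _; rewrite /Acard card_indicator.
  by case: (0 < c); case: (alt_step m c v) => //=; rewrite big1.
(* in the double sum over (c, u), only c = tlast u contributes *)
rewrite exchange_big; apply: eq_bigr => u _.
rewrite (sum_indicator_at (tlast u)) => [|c /and3P[_ _ /Aset_last[last_c _]]]; last first.
  exact: val_inj.
case: (boolP (u \in Aset m.+1 k r (tlast u))) => [u_in|]; last by rewrite !andbF.
by have [_ ->] := Aset_last u_in; rewrite andbT.
Qed.

Lemma Acard1 s : 0 < r <= k -> Acard 1 k r s = (r == s).
Proof.
move=> /andP[r_pos r_le]; pose r' : 'I_k.+1 := Ordinal (r_le : r < k.+1).
rewrite /Acard card_indicator (sum_indicator_at [tuple r']) => [|t].
  by rewrite inE /= r_pos eqxx alternatingE /= andbT.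
case: t => [[|a [|b tl]] //= size_t]; rewrite inE /= => /and4P[_ /eqP a_r _ _].
by apply: val_inj; congr [:: _]; apply: val_inj.
Qed.

Lemma Acard_le m s : Acard m k r s <= k.+1 ^ m.
Proof. by apply: leq_trans (max_card _) _; rewrite card_tuple card_ord. Qed.
End Counting.

Open Scope R_scope.

Lemma Rplus_associative : associative Rplus.
Proof. by move=> a b c; rewrite Rplus_assoc. Qed.

HB.instance Definition _ :=
  Monoid.isComLaw.Build R 0 Rplus Rplus_associative Rplus_comm Rplus_0_l.
HB.instance Definition _ := Monoid.isMulLaw.Build R 0 Rmult Rmult_0_l Rmult_0_r.
HB.instance Definition _ :=
  Monoid.isAddLaw.Build R Rmult Rplus Rmult_plus_distr_r Rmult_plus_distr_l.

Lemma INR_sum (I : finType) (P : pred I) (F : I -> nat) :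
  INR (\sum_(i | P i) F i) = \big[Rplus/0]_(i | P i) INR (F i).
Proof. exact: (big_morph INR plus_INR). Qed.

Lemma INR_expn m n : INR (m ^ n) = INR m ^ n.
Proof. by elim: n => [|n IH] //=; rewrite expnS mult_INR IH. Qed.

Lemma Rsum_minus n (P : pred 'I_n) (f g : 'I_n -> R) :
  \big[Rplus/0]_(i < n | P i) (f i - g i) =
  \big[Rplus/0]_(i < n | P i) f i - \big[Rplus/0]_(i < n | P i) g i.
Proof. by rewrite big_split /= -(big_morph Ropp Ropp_plus_distr Ropp_0). Qed.

Lemma Rsum_le (I : finType) (P Q : pred I) (f g : I -> R) :
  (forall i, P i -> Q i) -> (forall i, P i -> f i <= g i) -> (forall i, Q i -> 0 <= g i) ->
  \big[Rplus/0]_(i | P i) f i <= \big[Rplus/0]_(i | Q i) g i.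
Proof.
move=> PQ le_fg g_pos; rewrite big_mkcond [X in _ <= X]big_mkcond.
apply: (big_ind2 (fun a b => a <= b)) => [|a b c d ab cd|i _].
- exact: Rle_refl.
- exact: Rplus_le_compat ab cd.
- case: (boolP (P i)) => [Pi|_]; first by rewrite (PQ _ Pi); exact: le_fg.
  by case: ifP => [/g_pos|_]; [| exact: Rle_refl].
Qed.

Lemma Rabs_sum_le (I : finType) (P : pred I) (f : I -> R) :
  Rabs (\big[Rplus/0]_(i | P i) f i) <= \big[Rplus/0]_(i | P i) Rabs (f i).
Proof.
apply: (big_ind2 (fun a b => Rabs a <= b)) => [|a b c d ab cd|i _]; last lra.
  by rewrite Rabs_R0; lra.
by apply: Rle_trans (Rabs_triang _ _) _; lra.
Qed.

Lemma Rsum_const n (C : R) : \big[Rplus/0]_(i < n) C = INR n * C.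
Proof.
elim: n => [|n IH]; first by rewrite big_ord0 /=; ring.
by rewrite big_ord_recr IH S_INR /=; ring.
Qed.

Lemma Rsum_split {n : nat} (j : nat) (P Q : pred nat) {f : nat -> R} :
  (j < n)%N -> P j -> (forall c, P c && (c != j) = Q c) ->
  \big[Rplus/0]_(c < n | P c) f c = f j + \big[Rplus/0]_(c < n | Q c) f c.
Proof.
move=> j_lt Pj PQ; rewrite (bigD1 (Ordinal j_lt)) //=; congr Rplus.
by apply: eq_bigl => c; rewrite -PQ.
Qed.

Lemma telescope_up k x (f g : nat -> R) :
  g 1%N = x * f 1%N -> (forall s, (0 < s < k)%N -> g s.+1 = g s + x * f s.+1) ->
  forall s, (0 < s <= k)%N -> g s = x * \big[Rplus/0]_(c < k.+1 | (0 < c <= s)%N) f c.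
Proof.
move=> g1 g_step; elim=> // s IH /andP[_ s_lt].
rewrite (Rsum_split s.+1 (fun c => 0 < c <= s.+1) (fun c => 0 < c <= s))%N;
  try by [lia | move=> c; lia].
case: (posnP s) => [-> | s_pos].
  by rewrite big_pred0 => [|c]; [rewrite g1; ring | lia].
by rewrite (g_step s ltac:(lia)) (IH ltac:(lia)); ring.
Qed.

Lemma telescope_down k x (f g δ : nat -> R) :
  g k = δ k + x * f k ->
  (forall s, (0 < s < k)%N -> g s = δ s + x * f s + (g s.+1 - δ s.+1)) ->
  forall s, (0 < s <= k)%N -> g s = δ s + x * \big[Rplus/0]_(c < k.+1 | (s <= c)%N) f c.
Proof.
move=> gk g_step s; move: {2}(k - s)%N (erefl (k - s)%N) => d; elim: d s => [|d IH] s k_s s_range.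
  have -> : s = k by lia.
  rewrite (Rsum_split k (fun c => k <= c) (fun c => k < c))%N; try by [lia | move=> c; lia].
  by rewrite big_pred0 => [|c]; [rewrite gk; ring | rewrite ltnNge -ltnS ltn_ord].
rewrite (g_step s ltac:(lia)) (IH s.+1 ltac:(lia) ltac:(lia)).
rewrite (Rsum_split s (fun c => s <= c) (fun c => s < c))%N; try by [lia | move=> c; lia].
by ring.
Qed.

Lemma is_series_zero : is_series (fun _ : nat => 0) 0.
Proof.
have geom0 : is_series (fun n => 0 ^ n) (/ (1 - 0)).
  by apply: is_series_geom; rewrite Rabs_R0; lra.
have := is_series_scal_r 0 _ _ geom0.
by rewrite Rmult_0_r; apply: is_series_ext => n; rewrite Rmult_0_r.
Qed.

Lemma is_series_sum {I : Type} {s : seq I} {P : pred I} {u : I -> nat -> R} {l : I -> R} :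
  (forall i, P i -> is_series (u i) (l i)) ->
  is_series (fun n => \big[Rplus/0]_(i <- s | P i) u i n) (\big[Rplus/0]_(i <- s | P i) l i).
Proof.
move=> conv; elim: s => [|i s IH].
  by rewrite big_nil; apply: is_series_ext is_series_zero => n; rewrite big_nil.
rewrite big_cons; apply: is_series_ext (_ : is_series (fun n => if P i then u i n +
  \big[Rplus/0]_(j <- s | P j) u j n else \big[Rplus/0]_(j <- s | P j) u j n) _) => [n|].
  by rewrite big_cons.
by case: ifP => // Pi; apply: (is_series_plus _ _ _ _ (conv i Pi) IH).
Qed.

(* Series whose n-th term is a count N n <= K^(j n + 1) times x^(j n), with
   j n >= n, converge when K |x| < 1: they are dominated by K (K|x|)^n. *)
Lemma ex_series_counts {K : nat} {N j : nat -> nat} {x : R} :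
  INR K * Rabs x < 1 -> (forall n, N n <= K ^ (j n).+1 /\ n <= j n)%N ->
  ex_series (fun n => INR (N n) * x ^ j n).
Proof.
move=> Kx_lt1 bounds; set q := INR K * Rabs x in Kx_lt1 *.
have q_ge0 : 0 <= q by apply: Rmult_le_pos; [exact: pos_INR | exact: Rabs_pos].
apply: (ex_series_le _ (fun n => INR K * q ^ n)); last first.
  by apply: ex_series_scal_l; apply: ex_series_geom; rewrite Rabs_pos_eq //; lra.
move=> n; have [N_le n_le] := bounds n.
have N_bound : INR (N n) <= INR K ^ (j n).+1 by rewrite -INR_expn; apply/le_INR/leP.
have q_decr : q ^ j n <= q ^ n.
  rewrite -(subnKC n_le) pow_add -{2}(Rmult_1_r (q ^ n)).
  apply: Rmult_le_compat_l; first exact: pow_le.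
  by rewrite -(pow1 (j n - n)); apply: pow_incr; lra.
rewrite /norm /= /abs /= Rabs_mult (Rabs_pos_eq _ (pos_INR _)) -RPow_abs.
apply: Rle_trans (_ : INR K ^ (j n).+1 * Rabs x ^ j n <= _).
  by apply: Rmult_le_compat_r => //; apply: pow_le; apply: Rabs_pos.
rewrite /= Rmult_assoc -Rpow_mult_distr.
by apply: Rmult_le_compat_l => //; exact: pos_INR.
Qed.

Definition solves_system (k r : nat) (x : R) (a b : nat -> R) : Prop :=
  forall s, (0 < s <= k)%N ->
    b s = x * \big[Rplus/0]_(c < k.+1 | (0 < c <= s)%N) a c /\
    a s = (if r == s then 1 else 0) + x * \big[Rplus/0]_(c < k.+1 | (s <= c)%N) b c.

(* For 2 (k+1) |x| < 1 the system (S) has at most one solution: the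
   differences D, E of two solutions satisfy the homogeneous system, so the
   total mass S = sum_c (|D c| + |E c|) obeys S <= 2 (k+1) |x| S. *)
Lemma solves_system_unique k r x (a b a' b' : nat -> R) :
  2 * INR k.+1 * Rabs x < 1 -> solves_system k r x a b -> solves_system k r x a' b' ->
  forall s, (0 < s <= k)%N -> a s = a' s /\ b s = b' s.
Proof.
move=> x_small sol sol'.
pose D c := a c - a' c; pose E c := b c - b' c.
pose S := \big[Rplus/0]_(c < k.+1 | (0 < c)%N) (Rabs (D c) + Rabs (E c)).
have mass_ge0 c : 0 <= Rabs (D c) + Rabs (E c).
  by apply: Rplus_le_le_0_compat; apply: Rabs_pos.
have S_ge0 : 0 <= S.
  apply: big_ind => [|u v u_ge0 v_ge0|c _]; [exact: Rle_refl | | exact: mass_ge0].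
  exact: Rplus_le_le_0_compat.
have bound s : (0 < s <= k)%N -> Rabs (D s) <= Rabs x * S /\ Rabs (E s) <= Rabs x * S.
  move=> s_range; have [b_s a_s] := sol s s_range; have [b'_s a'_s] := sol' s s_range.
  have D_s : D s = x * \big[Rplus/0]_(c < k.+1 | (s <= c)%N) E c.
    by rewrite /D /E a_s a'_s Rsum_minus; ring.
  have E_s : E s = x * \big[Rplus/0]_(c < k.+1 | (0 < c <= s)%N) D c.
    by rewrite /D /E b_s b'_s Rsum_minus; ring.
  rewrite D_s E_s !Rabs_mult.
  split; apply: Rmult_le_compat_l (Rabs_pos x) _; apply: Rle_trans (Rabs_sum_le _ _ _) _;
    apply: Rsum_le => // c; try by [lia | move=> _; apply: mass_ge0].
    by move=> _; have := Rabs_pos (D c); lra.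
  by move=> _; have := Rabs_pos (E c); lra.
have S_le : S <= 2 * INR k.+1 * Rabs x * S.
  apply: Rle_trans (_ : S <= \big[Rplus/0]_(c < k.+1) (2 * (Rabs x * S))) _.
    apply: Rsum_le => // [c c_pos | c _]; last by have := Rabs_pos x; nra.
    have [D_le E_le] := bound c ltac:(have := ltn_ord c; lia); lra.
  by rewrite Rsum_const; lra.
have S0 : S = 0 by nra.
have abs_le0 v : Rabs v <= 0 -> v = 0 by move=> v_le; apply: Rabs_eq_0; have := Rabs_pos v; lra.
move=> s s_range; have [D_le E_le] := bound s s_range; rewrite S0 Rmult_0_r in D_le E_le.
by split; apply: Rminus_diag_uniq; apply: abs_le0.
Qed.

Section GeneratingFunctions.
Variables (k r : nat) (x : R).
Hypothesis r_range : (0 < r <= k)%N.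

Definition odd_term s n := INR (Acard (2*n + 1) k r s) * x ^ (2*n).
Definition even_term s n := INR (Acard (2*n + 2) k r s) * x ^ (2*n + 1).

Lemma even_term_step s n : (0 < s <= k)%N ->
  even_term s n = x * \big[Rplus/0]_(c < k.+1 | (0 < c <= s)%N) odd_term c n.
Proof.
move=> s_range; rewrite /even_term /odd_term addn2 Acard_step //.
rewrite (eq_bigl (fun c : 'I_k.+1 => 0 < c <= s)%N) => [|c]; last by rewrite /alt_step oddM.
rewrite INR_sum big_distrl big_distrr; apply: eq_bigr => c _ /=.
by rewrite addn1 /=; ring.
Qed.

Lemma odd_term_step s n : (0 < s <= k)%N ->
  odd_term s n.+1 = x * \big[Rplus/0]_(c < k.+1 | (s <= c)%N) even_term c n.
Proof.
move=> /andP[s_pos s_le]; rewrite /even_term /odd_term.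
rewrite (_ : 2 * n.+1 + 1 = (2*n + 1).+2)%N; last lia.
rewrite Acard_step ?s_pos //.
rewrite (eq_bigl (fun c : 'I_k.+1 => s <= c)%N) => [|c]; last first.
  by rewrite /alt_step addn1 /= oddM /=; lia.
rewrite INR_sum big_distrl big_distrr; apply: eq_bigr => c _.
have pow_e : x ^ (2 * n.+1) = x * x ^ (2*n + 1).
  by rewrite (_ : 2 * n.+1 = (2*n + 1).+1)%N //; lia.
have len_e : ((2*n + 1).+1 = 2*n + 2)%N by lia.
by rewrite pow_e len_e /=; ring.
Qed.

Lemma odd_term0 s : odd_term s 0 = if r == s then 1 else 0.
Proof. by rewrite /odd_term Acard1 //; case: (r == s) => /=; ring. Qed.

Hypothesis x_small : INR k.+1 * Rabs x < 1.

Lemma odd_series s : is_series (odd_term s) (Series (odd_term s)).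
Proof.
apply/Series_correct/(ex_series_counts x_small) => n.
by split; [rewrite addn1; exact: Acard_le | lia].
Qed.

Lemma even_series s : is_series (even_term s) (Series (even_term s)).
Proof.
apply/Series_correct/(ex_series_counts x_small) => n.
by split; [rewrite (_ : 2 * n + 2 = (2 * n + 1).+1)%N ?Acard_le //; lia | lia].
Qed.

Lemma gf_solves_system :
  solves_system k r x (fun s => Series (odd_term s)) (fun s => Series (even_term s)).
Proof.
move=> s s_range; split; apply: is_series_unique.
  have := is_series_scal_l x _ _ (is_series_sum (s := index_enum 'I_k.+1)
            (P := fun c : 'I_k.+1 => 0 < c <= s)%N (fun c _ => odd_series c)).
  by apply: is_series_ext => n; rewrite even_term_step.
apply: is_series_decr_1; rewrite odd_term0.
rewrite (_ : plus _ _ = scal x (\big[Rplus/0]_(c < k.+1 | (s <= c)%N) Series (even_term c))).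
  have := is_series_scal_l x _ _ (is_series_sum (s := index_enum 'I_k.+1)
            (P := fun c : 'I_k.+1 => s <= c)%N (fun c _ => even_series c)).
  by apply: is_series_ext => n; rewrite odd_term_step.
by rewrite /plus /opp /scal /= /mult /=; ring.
Qed.

End GeneratingFunctions.

Lemma ChebU_rec m y : ChebU m.+2 y = 2 * y * ChebU m.+1 y - ChebU m y.
Proof. by []. Qed.

(* Index-flexible forms of the Chebyshev recurrence and product rule at x/2:
   the index equations are side conditions, discharged by linear arithmetic. *)
Lemma cheb_rec (x : R) (i j l : nat) : (i = l.+2)%N -> (j = l.+1)%N ->
  ChebU i (x/2) = x * ChebU j (x/2) - ChebU l (x/2).
Proof. by move=> -> ->; rewrite ChebU_rec; field. Qed.

Lemma cheb_0 (x : R) (i : nat) : (i = 0)%N -> ChebU i (x/2) = 1.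
Proof. by move=> ->. Qed.

Lemma cheb_1 (x : R) (i : nat) : (i = 1)%N -> ChebU i (x/2) = x.
Proof. by move=> -> /=; field. Qed.

Lemma cheb_prod (x : R) (a b a1 b1 n : nat) :
  (a1 = a.+1)%N -> (b1 = b.+1)%N -> (n = (a + b).+2)%N ->
  ChebU a1 (x/2) * ChebU b1 (x/2) - ChebU a (x/2) * ChebU b (x/2) = ChebU n (x/2).
Proof.
move=> -> -> ->; elim: a b => [|a IH] b.
  by rewrite add0n (cheb_rec x b.+2 b.+1 b) //=; field.
rewrite addSnnS -IH (cheb_rec x a.+2 a.+1 a) // (cheb_rec x b.+2 b.+1 b) //; ring.
Qed.

Lemma sign_succ (m n : nat) : (m = n.+1)%N -> (-1) ^ m = - (-1) ^ n.
Proof. by move=> -> /=; ring. Qed.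

Lemma sign_even (m n : nat) : (m = 2 * n)%N -> (-1) ^ m = 1.
Proof. by move=> ->; rewrite pow_1_even. Qed.

Lemma sign_odd (m n : nat) : (m = (2 * n).+1)%N -> (-1) ^ m = -1.
Proof. by move=> ->; rewrite pow_1_odd. Qed.

Ltac rhs_cases := rewrite /rhs_even /rhs_odd; repeat case: ifP => ?; try (exfalso; lia).

Lemma rhs_even_base k r x : (0 < r <= k)%N -> ChebU (2*k) (x/2) <> 0 ->
  rhs_even k r 1 x = x * rhs_odd k r 1 x.
Proof.
move=> /andP[r_pos r_le] W_ne0; rhs_cases.
- have W_rec := cheb_rec x (2*k) (2*k+1-2*r) (2*k-2*1) ltac:(lia) ltac:(lia).
  rewrite (cheb_0 x (2*r-2) ltac:(lia)) (sign_succ (r+1+1) 2 ltac:(lia)).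
  by rewrite W_rec; field; rewrite -W_rec.
- rewrite (cheb_0 x (2*1-2) ltac:(lia)) (cheb_1 x (2*1-1) ltac:(lia)).
  by rewrite (_ : 2*k-2*r+1 = 2*k+1-2*r)%N; [field | lia].
Qed.

Lemma rhs_even_step k r s x : (0 < r <= k)%N -> (0 < s < k)%N -> ChebU (2*k) (x/2) <> 0 ->
  rhs_even k r s.+1 x = rhs_even k r s x + x * rhs_odd k r s.+1 x.
Proof.
move=> /andP[r_pos r_le] /andP[s_pos s_lt] W_ne0.
have [lt_r|gt_r|->] := ltngtP r s.+1; rhs_cases.
- rewrite (sign_succ (r+s.+1+1) (r+s+1) ltac:(lia)).
  rewrite (cheb_rec x (2*k-2*s) (2*k+1-2*s.+1) (2*k-2*s.+1) ltac:(lia) ltac:(lia)).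
  by field.
- rewrite (sign_succ (r+s.+1+1) (r+s+1) ltac:(lia)).
  rewrite (cheb_rec x (2*s.+1-1) (2*s.+1-2) (2*s-1) ltac:(lia) ltac:(lia)).
  by rewrite (_ : 2*k-2*r+1 = 2*k+1-2*r)%N; [field | lia].
- have W_prod := esym (cheb_prod x (2*s-1) (2*k+1-2*s.+1) (2*s.+1-2) (2*k+1-2*s.+1).+1
                        (2*k) ltac:(lia) ltac:(lia) ltac:(lia)).
  rewrite (cheb_rec x (2*k+1-2*s.+1).+1 (2*k+1-2*s.+1) (2*k-2*s.+1) ltac:(lia) ltac:(lia))
    in W_prod.
  rewrite (sign_odd (s.+1+s.+1+1) s.+1 ltac:(lia)) (sign_even (s.+1+s+1) s.+1 ltac:(lia)).
  rewrite (_ : 2*k-2*s.+1+1 = 2*k+1-2*s.+1)%N; last lia.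
  by rewrite W_prod; field; rewrite -W_prod.
Qed.

Lemma rhs_odd_top k r x : (0 < r <= k)%N -> ChebU (2*k) (x/2) <> 0 ->
  rhs_odd k r k x = (if r == k then 1 else 0) + x * rhs_even k r k x.
Proof.
move=> /andP[r_pos r_le] W_ne0; rhs_cases.
- rewrite (cheb_1 x (2*k+1-2*k) ltac:(lia)) (cheb_0 x (2*k-2*k) ltac:(lia)).
  by field.
- rewrite (sign_odd (r+k+1) k ltac:(lia)) (cheb_1 x (2*k+1-2*r) ltac:(lia)).
  by rewrite (cheb_0 x (2*k-2*k) ltac:(lia)); field.
Qed.

Lemma rhs_odd_step k r s x : (0 < r <= k)%N -> (0 < s < k)%N -> ChebU (2*k) (x/2) <> 0 ->
  rhs_odd k r s x - (if r == s then 1 else 0) =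
  x * rhs_even k r s x + (rhs_odd k r s.+1 x - (if r == s.+1 then 1 else 0)).
Proof.
move=> /andP[r_pos r_le] /andP[s_pos s_lt] W_ne0.
have [lt_r|gt_r|->] := ltngtP r s.
- rhs_cases.
  rewrite (sign_succ (r+s.+1+1) (r+s+1) ltac:(lia)).
  rewrite (cheb_rec x (2*k+1-2*s) (2*k-2*s) (2*k+1-2*s.+1) ltac:(lia) ltac:(lia)).
  by field.
- have [|gt_r'|->] := ltngtP r s.+1; first lia.
  + rhs_cases.
    rewrite (sign_succ (r+s.+1+1) (r+s+1) ltac:(lia)).
    rewrite (cheb_rec x (2*s.+1-2) (2*s-1) (2*s-2) ltac:(lia) ltac:(lia)).
    by rewrite (_ : 2*k-2*r+1 = 2*k+1-2*r)%N; [field | lia].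
  + rhs_cases.
    rewrite (sign_even (s.+1+s+1) s.+1 ltac:(lia)).
    rewrite (cheb_rec x (2*s.+1-2) (2*s-1) (2*s-2) ltac:(lia) ltac:(lia)).
    by rewrite (_ : 2*k-2*s.+1+1 = 2*k+1-2*s.+1)%N; [field | lia].
- rhs_cases.
  rewrite (sign_odd (s+s+1) s ltac:(lia)) (sign_even (s+s.+1+1) s.+1 ltac:(lia)).
  rewrite (cheb_rec x (2*k+1-2*s) (2*k-2*s) (2*k+1-2*s.+1) ltac:(lia) ltac:(lia)).
  by field.
Qed.


Lemma rhs_solves_system k r x : (0 < r <= k)%N -> ChebU (2*k) (x/2) <> 0 ->
  solves_system k r x (fun s => rhs_odd k r s x) (fun s => rhs_even k r s x).
Proof.
move=> r_range W_ne0 s s_range; split.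
  apply: (telescope_up k x (fun c => rhs_odd k r c x) (fun c => rhs_even k r c x)) s_range.
    exact: rhs_even_base.
  by move=> s' s'_range; apply: rhs_even_step.
apply: (telescope_down k x (fun c => rhs_even k r c x) (fun c => rhs_odd k r c x)
          (fun c => if r == c then 1 else 0)) s_range.
  exact: rhs_odd_top.
by move=> s' s'_range /=; have := rhs_odd_step k r s' x r_range s'_range W_ne0; lra.
Qed.

Lemma cheb_at0 n : ChebU (2*n) 0 = (-1) ^ n /\ ChebU (2*n).+1 0 = 0.
Proof.
elim: n => [|n [even_n odd_n]]; first by split; rewrite /=; ring.
rewrite (_ : 2 * n.+1 = (2*n).+2)%N; last lia.
by split; rewrite ChebU_rec ?even_n ?odd_n /=; ring.
Qed.

Lemma cheb_continuous n : continuity_pt (fun y => ChebU n (y/2)) 0.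
Proof.
suff [] : continuity_pt (fun y => ChebU n (y/2)) 0 /\
          continuity_pt (fun y => ChebU n.+1 (y/2)) 0 by [].
elim: n => [|n [cont_n cont_Sn]]; first by split; rewrite /=; reg.
split=> //.
change (continuity_pt (fun y => 2 * (y/2) * ChebU n.+1 (y/2) - ChebU n (y/2)) 0).
by apply: continuity_pt_minus => //; apply: continuity_pt_mult => //; reg.
Qed.

(* The denominator U_{2k}(x/2) does not vanish near x = 0, where it is +-1. *)
Lemma cheb_even_nonzero_near0 k :
  exists d, 0 < d /\ forall x, Rabs x < d -> ChebU (2*k) (x/2) <> 0.
Proof.
have value0 : ChebU (2*k) (0/2) = (-1) ^ k.
  by rewrite (_ : 0/2 = 0); [case: (cheb_at0 k) | field].
have [d [d_pos close]] := cheb_continuous (2*k) 1 Rlt_0_1.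
exists d; split=> // x x_lt W0.
have [x0|x_ne0] := Req_dec x 0.
  by move: W0; rewrite x0 value0 => W0; have := pow_1_abs k; rewrite W0 Rabs_R0; lra.
have := close x (conj (conj I (not_eq_sym x_ne0)) (ltac:(by rewrite Rminus_0_r) : Rabs (x - 0) < d)).
by rewrite /dist /= /R_dist value0 W0 Rminus_0_l Rabs_Ropp pow_1_abs; lra.
Qed.

(* For |x| below both thresholds, the generating functions and the closed
   forms are two solutions of (S), hence equal. *)
Theorem theorem4 (k r s : nat) :
  (1 <= r)%N -> (r <= k)%N -> (1 <= s)%N -> (s <= k)%N ->
  exists eps : R, Rlt 0 eps /\
    forall x : R, Rlt (Rabs x) eps ->
      is_series (fun n : nat => Rmult (INR (Acard (2*n + 1) k r s)) (pow x (2*n)))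
                (rhs_odd k r s x)
   /\ is_series (fun n : nat => Rmult (INR (Acard (2*n + 2) k r s)) (pow x (2*n + 1)))
                (rhs_even k r s x).
Proof.
move=> r_pos r_le s_pos s_le.
have r_range : (0 < r <= k)%N by apply/andP.
have s_range : (0 < s <= k)%N by apply/andP.
have [d [d_pos W_ne0]] := cheb_even_nonzero_near0 k.
have K_pos : 0 < 2 * INR k.+1 by have := lt_0_INR k.+1 (ltac:(lia)); lra.
exists (Rmin d (/ (2 * INR k.+1))); split; first by apply: Rmin_pos => //; apply: Rinv_0_lt_compat.
move=> x x_lt.
have W_x : ChebU (2*k) (x/2) <> 0 by apply/W_ne0/(Rlt_le_trans _ _ _ x_lt)/Rmin_l.
have Kx_small : 2 * INR k.+1 * Rabs x < 1.
  have x_lt' := Rlt_le_trans _ _ _ x_lt (Rmin_r _ _).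
  by have := Rmult_lt_compat_l _ _ _ K_pos x_lt'; rewrite Rinv_r; lra.
have x_small : INR k.+1 * Rabs x < 1 by have := Rabs_pos x; nra.
have [odd_eq even_eq] := solves_system_unique k r x _ _ _ _ Kx_small
  (gf_solves_system k r x r_range x_small) (rhs_solves_system k r x r_range W_x) s s_range.
split; [rewrite -odd_eq; exact: odd_series | rewrite -even_eq; exact: even_series].
Qed.
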